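(* There exists a compact metrizable abelian group $K$ having a countable dense subgroup $G$ which, in the subspace topology, is not $g$-reversible.
   Context: All topological groups are assumed Hausdorff. A topological group $G$ is called $g$-reversible if every continuous automorphism of $G$ (i.e. every continuous group isomorphism of $G$ onto itself) is an open map. *)

From Stdlib Require Import Reals List.
Open Scope R_scope.

Section TopDefs.
Variable T : Type.

Definition is_topology (op : (T -> Prop) -> Prop) : Prop :=
  op (fun _ => True) /\
  (forall U V, op U -> op V -> op (fun x => U x /\ V x)) /\
  (forall F : (T -> Prop) -> Prop, (forall U, F U -> op U) ->
      op (fun x => exists U, F U /\ U x)).

Definition hausdorff (op : (T -> Prop) -> Prop) : Prop :=
  forall x y, x <> y -> exists U V, op U /\ op V /\ U x /\ V y /\
    (forall z, U z -> V z -> False).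

Definition compact_space (op : (T -> Prop) -> Prop) : Prop :=
  forall F : (T -> Prop) -> Prop, (forall U, F U -> op U) ->
    (forall x, exists U, F U /\ U x) ->
    exists l : list (T -> Prop), (forall U, In U l -> F U) /\
      (forall x, exists U, In U l /\ U x).

Definition is_metric (d : T -> T -> R) : Prop :=
  (forall x y, 0 <= d x y) /\ (forall x y, d x y = 0 <-> x = y) /\
  (forall x y, d x y = d y x) /\ (forall x y z, d x z <= d x y + d y z).

Definition metric_open (d : T -> T -> R) (U : T -> Prop) : Prop :=
  forall x, U x -> exists eps, 0 < eps /\ forall y, d x y < eps -> U y.

Definition metrizable (op : (T -> Prop) -> Prop) : Prop :=
  exists d, is_metric d /\ forall U, op U <-> metric_open d U.

Definition dense (op : (T -> Prop) -> Prop) (S : T -> Prop) : Prop :=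
  forall U, op U -> (exists x, U x) -> exists x, U x /\ S x.

Definition countable_set (S : T -> Prop) : Prop :=
  exists f : nat -> T, forall x, S x <-> exists n, f n = x.

Definition is_abgroup (z : T) (add : T -> T -> T) (opp : T -> T) : Prop :=
  (forall x y w, add x (add y w) = add (add x y) w) /\
  (forall x y, add x y = add y x) /\
  (forall x, add z x = x) /\
  (forall x, add (opp x) x = z).

Definition is_subgroup (z : T) (add : T -> T -> T) (opp : T -> T)
  (S : T -> Prop) : Prop :=
  S z /\ (forall x y, S x -> S y -> S (add x y)) /\ (forall x, S x -> S (opp x)).

Definition prod_open (op : (T -> Prop) -> Prop) (W : T * T -> Prop) : Prop :=
  forall p, W p -> exists U V, op U /\ op V /\ U (fst p) /\ V (snd p) /\
    (forall x y, U x -> V y -> W (x, y)).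

Definition is_topgroup (z : T) (add : T -> T -> T) (opp : T -> T)
  (op : (T -> Prop) -> Prop) : Prop :=
  is_abgroup z add opp /\ is_topology op /\
  (forall W, op W -> prod_open op (fun p => W (add (fst p) (snd p)))) /\
  (forall W, op W -> op (fun x => W (opp x))).

Definition continuous_map (op : (T -> Prop) -> Prop) (f : T -> T) : Prop :=
  forall U, op U -> op (fun x => U (f x)).

Definition open_map (op : (T -> Prop) -> Prop) (f : T -> T) : Prop :=
  forall U, op U -> op (fun y => exists x, U x /\ f x = y).

Definition bijective_map (f : T -> T) : Prop :=
  (forall x y, f x = f y -> x = y) /\ (forall y, exists x, f x = y).

Definition additive_map (add : T -> T -> T) (f : T -> T) : Prop :=
  forall x y, f (add x y) = add (f x) (f y).

Definition g_reversible (add : T -> T -> T) (op : (T -> Prop) -> Prop) : Prop :=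
  forall f : T -> T, bijective_map f -> additive_map add f ->
    continuous_map op f -> open_map op f.

End TopDefs.

Definition sub_zero {T} (S : T -> Prop) (z : T) (Hz : S z) : {x | S x} :=
  exist S z Hz.
Definition sub_add {T} (S : T -> Prop) (add : T -> T -> T)
  (Hadd : forall x y, S x -> S y -> S (add x y)) : {x | S x} -> {x | S x} -> {x | S x} :=
  fun a b => exist S (add (proj1_sig a) (proj1_sig b))
                     (Hadd _ _ (proj2_sig a) (proj2_sig b)).
Definition sub_opp {T} (S : T -> Prop) (opp : T -> T)
  (Hopp : forall x, S x -> S (opp x)) : {x | S x} -> {x | S x} :=
  fun a => exist S (opp (proj1_sig a)) (Hopp _ (proj2_sig a)).
Definition subspace {T} (op : (T -> Prop) -> Prop) (S : T -> Prop)
  : ({x | S x} -> Prop) -> Prop :=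
  fun V => exists U, op U /\ forall a : {x | S x}, V a <-> U (proj1_sig a).

(* K is the Cantor group (Z/2)^N with the product topology, which is metrized by
   2^-(first index of disagreement) and is compact by König's lemma; G is the
   subgroup of finitely supported sequences.  The difference map
   D(x)_k = x_k + x_(k+1) is a continuous endomorphism of K that restricts to an
   automorphism of G (its inverse on G takes tail sums), but D is not open on G:
   D maps 1_[0,n], which has first coordinate 1, to the unit vector e_n, and
   e_n -> 0, so D does not map the open subgroup {x_0 = 0} onto a neighbourhood
   of 0. *)

From Stdlib Require Import Reals List Lra Lia Bool.
From Stdlib Require Import ConstructiveEpsilon ClassicalEpsilon Classical
  FunctionalExtensionality ProofIrrelevance.
Open Scope R_scope.
Set Implicit Arguments.

Lemma inv_pow2_pos n : 0 < / 2 ^ n.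
Proof. apply Rinv_0_lt_compat, pow_lt; lra. Qed.

Lemma inv_pow2_le m n : (m <= n)%nat -> / 2 ^ n <= / 2 ^ m.
Proof.
  intro Hmn. apply Rinv_le_contravar; [apply pow_lt; lra|].
  apply Rle_pow; [lra | exact Hmn].
Qed.

Lemma inv_pow2_lt m n : (m < n)%nat -> / 2 ^ n < / 2 ^ m.
Proof.
  intro Hmn. apply Rinv_lt_contravar; [apply Rmult_lt_0_compat; apply pow_lt; lra|].
  apply Rlt_pow; [lra | exact Hmn].
Qed.

Lemma inv_pow2_small eps : 0 < eps -> exists n, / 2 ^ n < eps.
Proof.
  intro Heps. destruct (pow_lt_1_zero (/ 2)) with (y := eps) as [N HN];
    [rewrite Rabs_right; lra | exact Heps |].
  exists N. specialize (HN N (le_n N)). rewrite pow_inv in HN.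
  rewrite Rabs_right in HN; [exact HN | left; apply inv_pow2_pos].
Qed.

Section SequenceSpace.
Variable A : Type.

Definition agree (n : nat) (x y : nat -> A) : Prop :=
  forall k, (k < n)%nat -> x k = y k.

Lemma agree_refl n x : agree n x x.
Proof. intros k _; reflexivity. Qed.

Lemma agree_sym n x y : agree n x y -> agree n y x.
Proof. intros H k Hk; symmetry; exact (H k Hk). Qed.

Lemma agree_trans n x y w : agree n x y -> agree n y w -> agree n x w.
Proof. intros H1 H2 k Hk; rewrite H1, H2; auto. Qed.

Lemma agree_le m n x y : (m <= n)%nat -> agree n x y -> agree m x y.
Proof. intros Hmn H k Hk; apply H; lia. Qed.

Definition cylinder_open (U : (nat -> A) -> Prop) : Prop :=
  forall x, U x -> exists n, forall y, agree n x y -> U y.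

Lemma cylinder_open_agree n x : cylinder_open (agree n x).
Proof. intros y Hy. exists n. intros w Hw. exact (agree_trans Hy Hw). Qed.

Lemma cylinder_topology : is_topology _ cylinder_open.
Proof.
  split; [|split].
  - intros x _. exists 0%nat; auto.
  - intros U V HU HV x [Ux Vx].
    destruct (HU x Ux) as [n Hn], (HV x Vx) as [m Hm].
    exists (Nat.max n m). intros y Hy.
    split; [apply Hn | apply Hm]; apply (agree_le (n := Nat.max n m)); auto; lia.
  - intros F HF x [U [FU Ux]]. destruct (HF U FU x Ux) as [n Hn].
    exists n. intros y Hy. exists U; auto.
Qed.

Lemma seq_neq (x y : nat -> A) : x <> y -> exists k, x k <> y k.
Proof.
  intro Hxy. apply NNPP. intro Hall. apply Hxy, functional_extensionality.
  intro k. apply NNPP. intro Hk. apply Hall. exists k; exact Hk.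
Qed.

Lemma cylinder_hausdorff : hausdorff _ cylinder_open.
Proof.
  intros x y Hxy. destruct (seq_neq Hxy) as [k Hk].
  exists (agree (S k) x), (agree (S k) y).
  repeat split; try apply cylinder_open_agree; try apply agree_refl.
  intros w Hx Hy. apply Hk. rewrite (Hx k), (Hy k); auto.
Qed.

(* The distance [/ 2 ^ m], where [m] is the first index at which [x] and [y] differ. *)
Definition seq_dist (x y : nat -> A) : R :=
  match excluded_middle_informative (exists k, x k <> y k) with
  | left H =>
      / 2 ^ proj1_sig (epsilon_smallest _
                         (fun k => excluded_middle_informative (x k <> y k)) H)
  | right _ => 0
  end.

Lemma seq_dist_spec x y :
  (x = y /\ seq_dist x y = 0) \/
  exists m, x m <> y m /\ agree m x y /\ seq_dist x y = / 2 ^ m.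
Proof.
  unfold seq_dist. destruct excluded_middle_informative as [H|H].
  - right. destruct epsilon_smallest as [m [Hm Hmin]]; simpl.
    exists m. split; [exact Hm | split; [| reflexivity]].
    intros j Hj. apply NNPP. intro Hxj. specialize (Hmin j Hxj). lia.
  - left. split; [|reflexivity]. apply NNPP. intro Hxy. exact (H (seq_neq Hxy)).
Qed.

Lemma seq_dist_first_diff m x y :
  x m <> y m -> agree m x y -> seq_dist x y = / 2 ^ m.
Proof.
  intros Hm Hagr. destruct (seq_dist_spec x y) as [[-> _]|[m' [Hm' [Hagr' ->]]]].
  - contradiction.
  - f_equal. f_equal. destruct (Nat.lt_total m m') as [Hlt|[Heq|Hlt]].
    + exfalso. exact (Hm (Hagr' m Hlt)).
    + exact (eq_sym Heq).
    + exfalso. exact (Hm' (Hagr m' Hlt)).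
Qed.

Lemma seq_dist_nonneg x y : 0 <= seq_dist x y.
Proof.
  destruct (seq_dist_spec x y) as [[_ ->]|[m [_ [_ ->]]]];
    [lra | left; apply inv_pow2_pos].
Qed.

Lemma seq_dist_ge k x y : x k <> y k -> / 2 ^ k <= seq_dist x y.
Proof.
  intro Hk. destruct (seq_dist_spec x y) as [[-> _]|[m [Hm [Hagr ->]]]].
  - contradiction.
  - apply inv_pow2_le. destruct (Nat.lt_ge_cases k m) as [Hkm|Hmk]; [|exact Hmk].
    exfalso. exact (Hk (Hagr k Hkm)).
Qed.

Lemma seq_dist_le n x y : agree n x y -> seq_dist x y <= / 2 ^ n.
Proof.
  intro Hagr. destruct (seq_dist_spec x y) as [[_ ->]|[m [Hm [_ ->]]]].
  - left; apply inv_pow2_pos.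
  - apply inv_pow2_le. destruct (Nat.lt_ge_cases m n) as [Hmn|Hnm]; [|exact Hnm].
    exfalso. exact (Hm (Hagr m Hmn)).
Qed.

Lemma seq_dist_metric : is_metric _ seq_dist.
Proof.
  split; [exact seq_dist_nonneg | split; [| split]].
  - intros x y. split.
    + intro H0. destruct (seq_dist_spec x y) as [[Hxy _]|[m [_ [_ Hd]]]]; [exact Hxy|].
      pose proof (inv_pow2_pos m). lra.
    + intros <-. destruct (seq_dist_spec x x) as [[_ Hd]|[m [Hm _]]];
        [exact Hd | congruence].
  - intros x y. destruct (seq_dist_spec x y) as [[<- ->]|[m [Hm [Hagr ->]]]].
    + destruct (seq_dist_spec x x) as [[_ Hd]|[m [Hm _]]]; [lra | congruence].
    + symmetry. apply seq_dist_first_diff; [congruence | apply agree_sym, Hagr].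
  - (* ultrametric: where [x] and [z] first differ, one of them differs from [y] *)
    intros x y z. pose proof (seq_dist_nonneg x y). pose proof (seq_dist_nonneg y z).
    destruct (seq_dist_spec x z) as [[_ ->]|[m [Hm [_ ->]]]]; [lra|].
    assert (Hxy : x m <> y m \/ y m <> z m).
    { apply NNPP. intros Hno. apply not_or_and in Hno as [H1 H2].
      apply NNPP in H1. apply NNPP in H2. congruence. }
    destruct Hxy as [Hxy|Hyz];
      [pose proof (seq_dist_ge _ _ _ Hxy) | pose proof (seq_dist_ge _ _ _ Hyz)]; lra.
Qed.

Lemma cylinder_open_metric_open U : cylinder_open U <-> metric_open _ seq_dist U.
Proof.
  split.
  - intros HU x Ux. destruct (HU x Ux) as [n Hn].
    exists (/ 2 ^ n). split; [apply inv_pow2_pos|].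
    intros y Hy. apply Hn. intros k Hk. apply NNPP. intro Hxy.
    pose proof (seq_dist_ge _ _ _ Hxy). pose proof (inv_pow2_lt Hk). lra.
  - intros HU x Ux. destruct (HU x Ux) as [eps [Heps Hball]].
    destruct (inv_pow2_small Heps) as [n Hn].
    exists n. intros y Hy. apply Hball. pose proof (seq_dist_le Hy). lra.
Qed.

Lemma cylinder_metrizable : metrizable _ cylinder_open.
Proof. exists seq_dist. split; [exact seq_dist_metric | exact cylinder_open_metric_open]. Qed.

End SequenceSpace.

Arguments cylinder_open {A} U.

Definition cantor := nat -> bool.
Definition cantor_zero : cantor := fun _ => false.
Definition cantor_add (x y : cantor) : cantor := fun k => xorb (x k) (y k).
Definition cantor_opp (x : cantor) : cantor := x.

Lemma cantor_abgroup : is_abgroup cantor cantor_zero cantor_add cantor_opp.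
Proof.
  unfold cantor_add, cantor_opp, cantor_zero.
  split; [|split; [|split]]; intros; apply functional_extensionality; intro k.
  - destruct (x k), (y k), (w k); reflexivity.
  - apply xorb_comm.
  - reflexivity.
  - apply xorb_nilpotent.
Qed.

Lemma cantor_topgroup : is_topgroup cantor cantor_zero cantor_add cantor_opp cylinder_open.
Proof.
  split; [exact cantor_abgroup | split; [apply cylinder_topology | split]].
  - intros W HW [x y] Wxy. destruct (HW _ Wxy) as [n Hn].
    exists (agree n x), (agree n y).
    repeat split; try apply cylinder_open_agree; try apply agree_refl.
    intros x' y' Hx Hy. apply Hn. intros k Hk. unfold cantor_add. simpl.
    rewrite Hx, Hy; auto.
  - intros W HW. exact HW.
Qed.

Definition seq_upd (x : cantor) (n : nat) (b : bool) : cantor :=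
  fun k => if Nat.eqb k n then b else x k.

Lemma agree_seq_upd n x b : agree n x (seq_upd x n b).
Proof. intros k Hk. unfold seq_upd. destruct (Nat.eqb_spec k n); [lia | reflexivity]. Qed.

Lemma agree_S_seq_upd n x y : agree n x y -> agree (S n) (seq_upd x n (y n)) y.
Proof.
  intros Hagr k Hk. unfold seq_upd.
  destruct (Nat.eqb_spec k n) as [->|]; [reflexivity | apply Hagr; lia].
Qed.

(* König's lemma for the binary tree, phrased with cylinders. *)
Lemma nested_cylinders (P : nat -> cantor -> Prop) (x0 : cantor) :
  P 0%nat x0 ->
  (forall n x, P n x -> P (S n) (seq_upd x n false) \/ P (S n) (seq_upd x n true)) ->
  exists y, forall n, exists x, P n x /\ agree n x y.
Proof.
  intros H0 Hstep.
  set (bit n x := if excluded_middle_informative (P (S n) (seq_upd x n false))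
                  then false else true).
  set (p := fix p n := match n with O => x0 | S n => seq_upd (p n) n (bit n (p n)) end).
  assert (Hp : forall n, P n (p n)).
  { induction n as [|n IH]; [exact H0|]. simpl. unfold bit.
    destruct excluded_middle_informative as [Hf|Hf]; [exact Hf|].
    destruct (Hstep n _ IH); tauto. }
  assert (Hmono : forall d n, agree n (p n) (p (n + d)%nat)).
  { induction d as [|d IH]; intro n; [rewrite Nat.add_0_r; apply agree_refl|].
    rewrite Nat.add_succ_r. eapply agree_trans; [apply IH|].
    eapply agree_le; [|apply agree_seq_upd]. lia. }
  exists (fun k => p (S k) k). intro n. exists (p n). split; [apply Hp|].
  intros k Hk. replace n with (S k + (n - S k))%nat by lia.
  symmetry. apply Hmono. lia.
Qed.

Lemma cantor_compact : compact_space cantor cylinder_open.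
Proof.
  intros F HF Hcov. apply NNPP. intro Hno.
  set (covered n x := exists l : list (cantor -> Prop), (forall U, In U l -> F U) /\
         forall y, agree n x y -> exists U, In U l /\ U y).
  assert (Hsplit : forall n x, ~ covered n x ->
            ~ covered (S n) (seq_upd x n false) \/ ~ covered (S n) (seq_upd x n true)).
  { intros n x Hx. apply NNPP. intro Hboth. apply Hx.
    apply not_or_and in Hboth as [Hf Ht]. apply NNPP in Hf. apply NNPP in Ht.
    destruct Hf as [lf [Ff Cf]], Ht as [lt [Ft Ct]].
    exists (lf ++ lt). split.
    - intros U HU. apply in_app_or in HU as [HU|HU]; auto.
    - intros y Hy. pose proof (agree_S_seq_upd Hy) as Hy'.
      destruct (y n);
        [destruct (Ct y Hy') as [U [HU Uy]] | destruct (Cf y Hy') as [U [HU Uy]]];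
        exists U; split; auto; apply in_or_app; auto. }
  assert (H0 : ~ covered 0%nat cantor_zero).
  { intros [l [Fl Cl]]. apply Hno. exists l. split; [exact Fl|].
    intro y. apply Cl. intros k Hk. lia. }
  destruct (nested_cylinders _ _ H0 Hsplit) as [y Hy].
  destruct (Hcov y) as [U [FU Uy]]. destruct (HF U FU y Uy) as [n Hn].
  destruct (Hy n) as [x [Hx Hxy]]. apply Hx.
  exists (U :: nil). split; [intros V [<-|[]]; exact FU|].
  intros w Hw. exists U. split; [left; reflexivity|].
  apply Hn. exact (agree_trans (agree_sym Hxy) Hw).
Qed.

Definition sub_map {T} (S : T -> Prop) (f : T -> T) (Hf : forall x, S x -> S (f x))
  (a : {x | S x}) : {x | S x} :=
  exist S (f (proj1_sig a)) (Hf _ (proj2_sig a)).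

Lemma sub_map_additive {T} (S : T -> Prop) (add : T -> T -> T)
    (Hadd : forall x y, S x -> S y -> S (add x y)) f (Hf : forall x, S x -> S (f x)) :
  additive_map T add f -> additive_map {x | S x} (sub_add S add Hadd) (sub_map S f Hf).
Proof. intros Hf_add [x Hx] [y Hy]. apply subset_eq_compat. apply Hf_add. Qed.

Lemma sub_map_continuous {T} (op : (T -> Prop) -> Prop) (S : T -> Prop) f
    (Hf : forall x, S x -> S (f x)) :
  continuous_map T op f -> continuous_map {x | S x} (subspace op S) (sub_map S f Hf).
Proof.
  intros Hcont V [U [HU HV]]. exists (fun x => U (f x)). split; [exact (Hcont U HU)|].
  intro a. apply HV.
Qed.

Definition fin_supp (x : cantor) : Prop := exists N, forall k, (N <= k)%nat -> x k = false.

Lemma fin_supp_zero : fin_supp cantor_zero.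
Proof. exists 0%nat. reflexivity. Qed.

Lemma fin_supp_add x y : fin_supp x -> fin_supp y -> fin_supp (cantor_add x y).
Proof.
  intros [N HN] [M HM]. exists (Nat.max N M). intros k Hk. unfold cantor_add.
  rewrite HN, HM; [reflexivity | lia | lia].
Qed.

Lemma fin_supp_opp x : fin_supp x -> fin_supp (cantor_opp x).
Proof. exact (fun Hx => Hx). Qed.

Lemma fin_supp_testbit n : fin_supp (Nat.testbit n).
Proof.
  exists (S (Nat.log2 n)). intros k Hk. destruct n as [|n]; [apply Nat.bits_0|].
  apply Nat.bits_above_log2. pose proof (Nat.log2_lt_lin (S n)). lia.
Qed.

Lemma fin_supp_testbit_inv x : fin_supp x -> exists n, Nat.testbit n = x.
Proof.
  intros [N HN]. revert x HN. induction N as [|N IH]; intros x HN.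
  - exists 0%nat. apply functional_extensionality. intro k.
    rewrite HN; [apply Nat.bits_0 | lia].
  - destruct (IH (fun k => x (S k))) as [n Hn]; [intros k Hk; apply HN; lia|].
    exists (2 * n + Nat.b2n (x 0%nat))%nat. apply functional_extensionality.
    intros [|k]; [apply Nat.testbit_0_r|].
    rewrite Nat.testbit_succ_r, Hn. reflexivity.
Qed.

Lemma fin_supp_countable : countable_set cantor fin_supp.
Proof.
  exists Nat.testbit. intro x. split; [apply fin_supp_testbit_inv|].
  intros [n <-]. apply fin_supp_testbit.
Qed.

Lemma fin_supp_dense : dense cantor cylinder_open fin_supp.
Proof.
  intros U HU [x Ux]. destruct (HU x Ux) as [n Hn].
  exists (fun k => if Nat.ltb k n then x k else false). split.
  - apply Hn. intros k Hk. destruct (Nat.ltb_spec k n); [reflexivity | lia].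
  - exists n. intros k Hk. destruct (Nat.ltb_spec k n); [lia | reflexivity].
Qed.

Definition cantor_diff (x : cantor) : cantor := fun k => xorb (x k) (x (S k)).

Lemma cantor_diff_additive : additive_map cantor cantor_add cantor_diff.
Proof.
  intros x y. apply functional_extensionality. intro k. unfold cantor_diff, cantor_add.
  destruct (x k), (y k), (x (S k)), (y (S k)); reflexivity.
Qed.

Lemma cantor_diff_continuous : continuous_map cantor cylinder_open cantor_diff.
Proof.
  intros U HU x Ux. destruct (HU _ Ux) as [n Hn]. exists (S n).
  intros y Hy. apply Hn. intros k Hk. unfold cantor_diff.
  rewrite (Hy k), (Hy (S k)) by lia. reflexivity.
Qed.

Lemma fin_supp_cantor_diff x : fin_supp x -> fin_supp (cantor_diff x).
Proof.
  intros [N HN]. exists N. intros k Hk. unfold cantor_diff. rewrite !HN by lia. reflexivity.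
Qed.

Lemma cantor_diff_eq0_const x : cantor_diff x = cantor_zero -> forall k, x k = x 0%nat.
Proof.
  intros Hx. induction k as [|k IH]; [reflexivity|]. rewrite <- IH.
  assert (Hk : cantor_diff x k = false) by (rewrite Hx; reflexivity).
  unfold cantor_diff in Hk. destruct (x k), (x (S k)); easy.
Qed.

Lemma cantor_diff_inj_fin_supp x y :
  fin_supp x -> fin_supp y -> cantor_diff x = cantor_diff y -> x = y.
Proof.
  intros Hx Hy Hxy. destruct (fin_supp_add Hx Hy) as [N HN].
  assert (H0 : cantor_diff (cantor_add x y) = cantor_zero).
  { rewrite cantor_diff_additive, Hxy. apply functional_extensionality. intro k.
    apply xorb_nilpotent. }
  apply functional_extensionality. intro k.
  pose proof (cantor_diff_eq0_const H0 k) as Hk.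
  rewrite <- (cantor_diff_eq0_const H0 N), (HN N (le_n N)) in Hk.
  unfold cantor_add in Hk. destruct (x k), (y k); easy.
Qed.

Fixpoint tail_sum (y : cantor) (k L : nat) : bool :=
  match L with O => false | S L => xorb (y k) (tail_sum y (S k) L) end.

Lemma tail_sum_snoc y L k : tail_sum y k (S L) = xorb (tail_sum y k L) (y (k + L)%nat).
Proof.
  revert k. induction L as [|L IH]; intro k.
  - simpl. rewrite Nat.add_0_r. destruct (y k); reflexivity.
  - change (tail_sum y k (S (S L))) with (xorb (y k) (tail_sum y (S k) (S L))).
    rewrite IH, Nat.add_succ_comm. simpl. symmetry. apply xorb_assoc.
Qed.

Lemma tail_sum_vanish y N L k :
  (forall j, (N <= j)%nat -> y j = false) -> (N <= k)%nat -> tail_sum y k L = false.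
Proof.
  intros HN. revert k. induction L as [|L IH]; intros k Hk; [reflexivity|].
  simpl. rewrite HN, IH by lia. reflexivity.
Qed.

Lemma cantor_diff_surj_fin_supp y : fin_supp y -> exists x, fin_supp x /\ cantor_diff x = y.
Proof.
  intros [N HN]. exists (fun k => tail_sum y k N). split.
  - exists N. intros k Hk. exact (tail_sum_vanish _ _ HN Hk).
  - apply functional_extensionality. intro k. unfold cantor_diff.
    pose proof (tail_sum_snoc y N k) as Hsnoc. rewrite (HN (k + N)%nat) in Hsnoc by lia.
    rewrite xorb_false_r in Hsnoc. rewrite <- Hsnoc. simpl.
    destruct (y k), (tail_sum y (S k) N); reflexivity.
Qed.

Definition unit_vec (n : nat) : cantor := fun k => Nat.eqb k n.
Definition interval_ind (n : nat) : cantor := fun k => Nat.leb k n.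

Lemma cantor_diff_interval_ind n : cantor_diff (interval_ind n) = unit_vec n.
Proof.
  apply functional_extensionality. intro k. unfold cantor_diff, interval_ind, unit_vec.
  destruct (Nat.leb_spec k n), (Nat.leb_spec (S k) n), (Nat.eqb_spec k n);
    reflexivity || lia.
Qed.

Lemma fin_supp_interval_ind n : fin_supp (interval_ind n).
Proof. exists (S n). intros k Hk. apply Nat.leb_gt. lia. Qed.

Definition fin_supp_diff : {x | fin_supp x} -> {x | fin_supp x} :=
  sub_map fin_supp cantor_diff fin_supp_cantor_diff.

Lemma fin_supp_diff_bijective : bijective_map {x | fin_supp x} fin_supp_diff.
Proof.
  split.
  - intros [x Hx] [y Hy] Hxy. apply subset_eq_compat.
    apply (cantor_diff_inj_fin_supp Hx Hy). exact (f_equal (@proj1_sig _ _) Hxy).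
  - intros [y Hy]. destruct (cantor_diff_surj_fin_supp Hy) as [x [Hx Hxy]].
    exists (exist _ x Hx). apply subset_eq_compat. exact Hxy.
Qed.

Lemma fin_supp_diff_not_open :
  ~ open_map {x | fin_supp x} (subspace cylinder_open fin_supp) fin_supp_diff.
Proof.
  intro Hopen.
  set (V := fun a : {x | fin_supp x} => proj1_sig a 0%nat = false).
  assert (HV : subspace cylinder_open fin_supp V).
  { exists (fun x : cantor => x 0%nat = false). split; [|intro a; reflexivity].
    intros x Hx. exists 1%nat. intros y Hy. rewrite <- Hy by lia. exact Hx. }
  destruct (Hopen V HV) as [U [HU HimU]].
  assert (U0 : U cantor_zero).
  { set (zero := exist fin_supp cantor_zero fin_supp_zero).
    apply (HimU zero). exists zero. split; [reflexivity|].
    apply subset_eq_compat. apply functional_extensionality. reflexivity. }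
  destruct (HU _ U0) as [n Hn].
  assert (Un : U (unit_vec n)).
  { apply Hn. intros k Hk. apply eq_sym, Nat.eqb_neq. lia. }
  assert (He : fin_supp (unit_vec n)).
  { rewrite <- cantor_diff_interval_ind. apply fin_supp_cantor_diff, fin_supp_interval_ind. }
  destruct (proj2 (HimU (exist _ _ He)) Un) as [[x Hx] [Vx Hxe]].
  apply (f_equal (@proj1_sig _ _)) in Hxe. simpl in Hxe.
  rewrite <- cantor_diff_interval_ind in Hxe.
  apply (cantor_diff_inj_fin_supp Hx (fin_supp_interval_ind n)) in Hxe. subst x.
  discriminate Vx.
Qed.

Lemma fin_supp_not_g_reversible :
  ~ g_reversible {x | fin_supp x} (sub_add fin_supp cantor_add fin_supp_add)
      (subspace cylinder_open fin_supp).
Proof.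
  intro Hrev. apply fin_supp_diff_not_open. apply Hrev.
  - exact fin_supp_diff_bijective.
  - apply sub_map_additive, cantor_diff_additive.
  - apply sub_map_continuous, cantor_diff_continuous.
Qed.

Theorem mainTheorem16 :
  exists (K : Type) (z : K) (add : K -> K -> K) (opp : K -> K)
         (op : (K -> Prop) -> Prop),
    is_topgroup K z add opp op /\ hausdorff K op /\ compact_space K op /\
    metrizable K op /\
    exists (G : K -> Prop) (Hz : G z)
           (Hadd : forall x y, G x -> G y -> G (add x y))
           (Hopp : forall x, G x -> G (opp x)),
      countable_set K G /\ dense K op G /\
      ~ g_reversible {x | G x} (sub_add G add Hadd) (subspace op G).
Proof.
  exists cantor, cantor_zero, cantor_add, cantor_opp, cylinder_open.
  split; [exact cantor_topgroup|].
  split; [apply cylinder_hausdorff|].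
  split; [exact cantor_compact|].
  split; [apply cylinder_metrizable|].
  exists fin_supp, fin_supp_zero, fin_supp_add, fin_supp_opp.
  split; [exact fin_supp_countable|].
  split; [exact fin_supp_dense | exact fin_supp_not_g_reversible].
Qed.
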